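(* Let $n\ge 3$ and let $v_1<\cdots<v_{n-1}$ be positive integers with $\mathrm{ML}(v_1,\ldots,v_{n-1})=L>\frac1n$. Then $\mathrm{ML}(v_1,\ldots,v_n)\ge\frac1n$ for every positive integer $v_n$ with $v_n\ge v_{n-1}(2v_{n-1}-1)$.
   Context: For a real number $x$, $\Vert x\Vert$ denotes the distance from $x$ to the nearest integer. For positive integers $v_1,\ldots,v_k$, the maximum loneliness is $\mathrm{ML}(v_1,\ldots,v_k)=\max_{t\in\mathbb{R}}\min_{1\le i\le k}\Vert t v_i\Vert$. *)

From Stdlib Require Import Reals List.
From Coquelicot Require Import Coquelicot.
Import ListNotations.
Open Scope R_scope.

Definition dist_int (x : R) : R :=
  Rmin (x - IZR (Int_part x)) (IZR (Int_part x) + 1 - x).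

(* min_{i} ||t v_i|| for a (nonempty) list of speeds vs;
   1 acts as neutral element since ||.|| <= 1/2. *)
Definition min_dist (vs : list nat) (t : R) : R :=
  fold_right (fun v acc => Rmin (dist_int (t * INR v)) acc) 1 vs.

(* ML(v_1,...,v_k) = max_t min_i ||t v_i||, taken as the supremum
   (it is attained, being a max of a continuous periodic function). *)
Definition ML (vs : list nat) : R :=
  real (Lub_Rbar (fun r => exists t : R, r = min_dist vs t)).

(* Suppose ||t0 v_i|| > 1/n for every i.  Around t0 each v_i has a closed "safe interval"
   [(k_i + 1/n)/v_i, (k_i + 1 - 1/n)/v_i] on which ||t v_i|| >= 1/n, and all these intervals
   contain t0.  With c = 1/n, the overlap of two of them is a fraction J/(n v_i v_j) with J a
   positive integer (a multiple of v_i when v_i = v_j), so it has length at least 2c/v_n as soon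
   as v_n >= 2 v_i v_j for v_i <> v_j and v_n >= 2 v_i.  Hence the common intersection contains
   a window of length 2c/v_n starting at the largest left endpoint, and every window of that
   length contains a t with ||t v_n|| >= c. *)

From Stdlib Require Import Reals List Lra Lia Psatz ZArith Classical.
From Coquelicot Require Import Coquelicot.
Import ListNotations.
Open Scope R_scope.

Lemma min_dist_le_1 (vs : list nat) (t : R) : min_dist vs t <= 1.
Proof.
  induction vs as [|a vs IH]; simpl; [lra|].
  eapply Rle_trans; [apply Rmin_r | exact IH].
Qed.

Lemma min_dist_gt (vs : list nat) (t c : R) :
  min_dist vs t > c -> forall x, In x vs -> dist_int (t * INR x) > c.
Proof.
  induction vs as [|a vs IH]; simpl; intros H x Hx; [contradiction|].
  destruct Hx as [<- | Hx].
  - eapply Rlt_le_trans; [exact H | apply Rmin_l].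
  - apply IH; [eapply Rlt_le_trans; [exact H | apply Rmin_r] | exact Hx].
Qed.

Lemma min_dist_ge (vs : list nat) (t c : R) :
  c <= 1 -> (forall x, In x vs -> dist_int (t * INR x) >= c) -> min_dist vs t >= c.
Proof.
  intro Hc; induction vs as [|a vs IH]; simpl; intro H; [lra|].
  apply Rle_ge, Rmin_glb; apply Rge_le; [apply H; left; reflexivity |].
  apply IH; intros x Hx; apply H; right; exact Hx.
Qed.

Lemma ML_ge_min_dist (vs : list nat) (t : R) : ML vs >= min_dist vs t.
Proof.
  unfold ML.
  destruct (Lub_Rbar_correct (fun r => exists t : R, r = min_dist vs t)) as [Hub Hlub].
  assert (Ht := Hub (min_dist vs t) (ex_intro _ t eq_refl)).
  assert (H1 : Rbar_le (Lub_Rbar (fun r => exists t : R, r = min_dist vs t)) 1).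
  { apply Hlub; intros x [s ->]; apply min_dist_le_1. }
  destruct (Lub_Rbar _); simpl in *; try contradiction; lra.
Qed.

Lemma ML_gt_min_dist (vs : list nat) (c : R) : ML vs > c -> exists t, min_dist vs t > c.
Proof.
  intro H; apply NNPP; intro Hnone.
  assert (Hall : forall t, min_dist vs t <= c).
  { intro t; apply Rnot_lt_le; intro Hlt; apply Hnone; exists t; exact Hlt. }
  unfold ML in H.
  destruct (Lub_Rbar_correct (fun r => exists t : R, r = min_dist vs t)) as [Hub Hlub].
  assert (Hc : Rbar_le (Lub_Rbar (fun r => exists t : R, r = min_dist vs t)) c).
  { apply Hlub; intros x [s ->]; apply Hall. }
  assert (H0 := Hub (min_dist vs 0) (ex_intro _ 0 eq_refl)).
  destruct (Lub_Rbar _); simpl in *; try contradiction; lra.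
Qed.

Lemma dist_int_ge_between (k : Z) (x c : R) :
  IZR k + c <= x <= IZR k + 1 - c -> dist_int x >= c.
Proof.
  intros Hx; unfold dist_int.
  destruct (Rle_or_lt c 0) as [Hc | Hc].
  - pose proof (base_Int_part x); apply Rle_ge, Rmin_glb; lra.
  - rewrite <- (Int_part_spec x k) by lra.
    apply Rle_ge, Rmin_glb; lra.
Qed.

Lemma Int_part_bounds_of_dist_int_gt (x c : R) :
  dist_int x > c -> IZR (Int_part x) + c < x < IZR (Int_part x) + 1 - c.
Proof. unfold dist_int, Rmin; destruct (Rle_dec _ _); lra. Qed.

Lemma dist_int_ge_in_unit_window (y c : R) :
  0 < c -> 2 * c <= 1 -> exists s, y <= s <= y + 2 * c /\ dist_int s >= c.
Proof.
  intros Hc Hc2.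
  set (k := Int_part y); destruct (base_Int_part y) as [Hk1 Hk2]; fold k in Hk1, Hk2.
  destruct (Rlt_dec (y - IZR k) c) as [Hlo | Hlo].
  { exists (IZR k + c); split; [lra |]. apply (dist_int_ge_between k); lra. }
  destruct (Rlt_dec (1 - c) (y - IZR k)) as [Hhi | Hhi].
  { exists (IZR k + 1 + c); split; [lra |].
    apply (dist_int_ge_between (k + 1)); rewrite plus_IZR; lra. }
  exists y; split; [lra |]. apply (dist_int_ge_between k); lra.
Qed.

Lemma dist_int_ge_in_window (A N c : R) :
  0 < N -> 0 < c -> 2 * c <= 1 ->
  exists t, A <= t <= A + 2 * c / N /\ dist_int (t * N) >= c.
Proof.
  intros HN Hc Hc2.
  destruct (dist_int_ge_in_unit_window (A * N) c Hc Hc2) as [s [[Hs1 Hs2] Hs]].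
  exists (s / N); split.
  - split.
    + apply (Rmult_le_reg_r N); [exact HN |]; unfold Rdiv; rewrite Rmult_assoc, Rinv_l; lra.
    + apply (Rmult_le_reg_r N); [exact HN |].
      replace ((A + 2 * c / N) * N) with (A * N + 2 * c) by (field; lra).
      unfold Rdiv; rewrite Rmult_assoc, Rinv_l; lra.
  - replace (s / N * N) with s by (field; lra); exact Hs.
Qed.

Lemma exists_argmax {A : Type} (f : A -> R) (l : list A) :
  l <> [] -> exists x, In x l /\ forall y, In y l -> f y <= f x.
Proof.
  induction l as [|a l IH]; intro Hne; [congruence |].
  destruct l as [|b l].
  { exists a; split; [left; reflexivity |]. intros y [<- | []]; lra. }
  destruct IH as [x [Hx Hmax]]; [discriminate |].
  destruct (Rle_dec (f a) (f x)).
  - exists x; split; [right; exact Hx |]. intros y [<- | Hy]; auto.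
  - exists a; split; [left; reflexivity |].
    intros y [<- | Hy]; [lra | specialize (Hmax y Hy); lra].
Qed.

(* [J] is [n x y] times the overlap of the safe intervals of speeds [x] and [y]; when [x = y]
   it factors as [x * (n * (ky + 1 - kx) - 2)], hence is at least [x]. *)
Lemma overlap_numerator_bound (n x y N kx ky : Z) :
  (0 < x)%Z -> (x <> y -> 2 * x * y <= N)%Z -> (2 * x <= N)%Z ->
  (0 < n * (x * (ky + 1) - y * kx) - x - y)%Z ->
  (2 * x * y <= N * (n * (x * (ky + 1) - y * kx) - x - y))%Z.
Proof.
  intros Hx Hxy HxN HJ.
  destruct (Z.eq_dec x y) as [<- | Hne]; [| specialize (Hxy Hne); nia].
  replace (n * (x * (ky + 1) - x * kx) - x - x)%Z with (x * (n * (ky + 1 - kx) - 2))%Z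
    in * by ring.
  assert (0 < n * (ky + 1 - kx) - 2)%Z by nia.
  nia.
Qed.

Lemma safe_intervals_overlap_ge (n x y N : nat) (kx ky : Z) :
  (0 < n)%nat -> (0 < x)%nat -> (0 < y)%nat -> (0 < N)%nat ->
  (x <> y -> 2 * x * y <= N)%nat -> (2 * x <= N)%nat ->
  (IZR kx + 1 / INR n) / INR x < (IZR ky + 1 - 1 / INR n) / INR y ->
  (IZR ky + 1 - 1 / INR n) / INR y - (IZR kx + 1 / INR n) / INR x
    >= 2 * (1 / INR n) / INR N.
Proof.
  intros Hn Hx Hy HN Hxy HxN Hlt.
  set (J := (Z.of_nat n * (Z.of_nat x * (ky + 1) - Z.of_nat y * kx)
             - Z.of_nat x - Z.of_nat y)%Z).
  assert (Rn : 0 < INR n) by (apply lt_0_INR; lia).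
  assert (Rx : 0 < INR x) by (apply lt_0_INR; lia).
  assert (Ry : 0 < INR y) by (apply lt_0_INR; lia).
  assert (RN : 0 < INR N) by (apply lt_0_INR; lia).
  assert (Hoverlap : (IZR ky + 1 - 1 / INR n) / INR y - (IZR kx + 1 / INR n) / INR x
                     = IZR J / (INR n * INR x * INR y)).
  { unfold J; repeat rewrite ?minus_IZR, ?mult_IZR, ?plus_IZR; rewrite <- !INR_IZR_INZ.
    field; lra. }
  assert (HJ : (0 < J)%Z).
  { apply lt_IZR; apply (Rmult_lt_reg_r (/ (INR n * INR x * INR y))).
    - apply Rinv_0_lt_compat; repeat apply Rmult_lt_0_compat; lra.
    - rewrite Rmult_0_l; fold (Rdiv (IZR J) (INR n * INR x * INR y)); rewrite <- Hoverlap; lra. }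
  assert (HNJ := overlap_numerator_bound (Z.of_nat n) (Z.of_nat x) (Z.of_nat y) (Z.of_nat N)
                   kx ky ltac:(lia) ltac:(lia) ltac:(lia) HJ).
  fold J in HNJ; apply IZR_le in HNJ; rewrite !mult_IZR, <- !INR_IZR_INZ in HNJ.
  rewrite Hoverlap; apply Rle_ge.
  apply (Rmult_le_reg_r (INR n * INR x * INR y * INR N));
    [repeat apply Rmult_lt_0_compat; lra |].
  replace (2 * (1 / INR n) / INR N * (INR n * INR x * INR y * INR N))
    with (2 * INR x * INR y) by (field; lra).
  replace (IZR J / (INR n * INR x * INR y) * (INR n * INR x * INR y * INR N))
    with (INR N * IZR J) by (field; lra).
  exact HNJ.
Qed.

(* For [||t x|| > c], the component of [{s | ||s x|| >= c}] containing [t] is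
   [[safe_lo c t x, safe_hi c t x]]. *)
Definition safe_lo (c t : R) (x : nat) : R := (IZR (Int_part (t * INR x)) + c) / INR x.
Definition safe_hi (c t : R) (x : nat) : R := (IZR (Int_part (t * INR x)) + 1 - c) / INR x.

Lemma safe_interval_contains (c t : R) (x : nat) :
  (0 < x)%nat -> dist_int (t * INR x) > c -> safe_lo c t x < t < safe_hi c t x.
Proof.
  intros Hx Hd; assert (Rx : 0 < INR x) by (apply lt_0_INR; lia).
  destruct (Int_part_bounds_of_dist_int_gt _ _ Hd) as [H1 H2].
  unfold safe_lo, safe_hi; split; apply (Rmult_lt_reg_r (INR x)); try exact Rx.
  - replace ((IZR (Int_part (t * INR x)) + c) / INR x * INR x)
      with (IZR (Int_part (t * INR x)) + c) by (field; lra); exact H1.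
  - replace ((IZR (Int_part (t * INR x)) + 1 - c) / INR x * INR x)
      with (IZR (Int_part (t * INR x)) + 1 - c) by (field; lra); exact H2.
Qed.

Lemma dist_int_ge_on_safe_interval (c t s : R) (x : nat) :
  (0 < x)%nat -> safe_lo c t x <= s <= safe_hi c t x -> dist_int (s * INR x) >= c.
Proof.
  intros Hx [H1 H2]; assert (Rx : 0 < INR x) by (apply lt_0_INR; lia).
  apply (dist_int_ge_between (Int_part (t * INR x))).
  unfold safe_lo, safe_hi in *; split.
  - apply (Rmult_le_compat_r (INR x)) in H1; [| lra].
    replace ((IZR (Int_part (t * INR x)) + c) / INR x * INR x)
      with (IZR (Int_part (t * INR x)) + c) in H1 by (field; lra); exact H1.
  - apply (Rmult_le_compat_r (INR x)) in H2; [| lra].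
    replace ((IZR (Int_part (t * INR x)) + 1 - c) / INR x * INR x)
      with (IZR (Int_part (t * INR x)) + 1 - c) in H2 by (field; lra); exact H2.
Qed.

Lemma ML_app_large_speed_ge (ws : list nat) (n N : nat) :
  (2 <= n)%nat -> ws <> [] -> (forall x, In x ws -> (0 < x)%nat) -> (0 < N)%nat ->
  (forall x y, In x ws -> In y ws -> x <> y -> (2 * x * y <= N)%nat) ->
  (forall x, In x ws -> (2 * x <= N)%nat) ->
  ML ws > 1 / INR n -> ML (ws ++ [N]) >= 1 / INR n.
Proof.
  intros Hn Hne Hpos HN HxyN HxN HML.
  destruct (ML_gt_min_dist _ _ HML) as [t0 Ht0].
  assert (Rn : 2 <= INR n) by (apply (le_INR 2) in Hn; simpl in Hn; lra).
  set (c := 1 / INR n) in *.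
  assert (Hc : 0 < c) by (unfold c; apply Rdiv_lt_0_compat; lra).
  assert (Hc2 : 2 * c <= 1).
  { unfold c; apply (Rmult_le_reg_r (INR n)); [lra |]; field_simplify; lra. }
  assert (Hsafe : forall x, In x ws -> safe_lo c t0 x < t0 < safe_hi c t0 x).
  { intros x Hx; apply safe_interval_contains; [apply Hpos; exact Hx |].
    exact (min_dist_gt _ _ _ Ht0 x Hx). }
  destruct (exists_argmax (safe_lo c t0) ws Hne) as [xm [Hxm Hmax]].
  assert (RN : 0 < INR N) by (apply lt_0_INR; exact HN).
  destruct (dist_int_ge_in_window (safe_lo c t0 xm) (INR N) c RN Hc Hc2) as [t [[Ht1 Ht2] HtN]].
  eapply Rge_trans; [apply (ML_ge_min_dist _ t) |].
  apply min_dist_ge; [lra |].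
  intros y Hy; apply in_app_or in Hy; destruct Hy as [Hy | [<- | []]]; [| exact HtN].
  assert (Hgap := safe_intervals_overlap_ge n xm y N (Int_part (t0 * INR xm))
                    (Int_part (t0 * INR y)) ltac:(lia) (Hpos xm Hxm) (Hpos y Hy) HN
                    (HxyN xm y Hxm Hy) (HxN xm Hxm)).
  fold c (safe_lo c t0 xm) (safe_hi c t0 y) in Hgap.
  specialize (Hgap ltac:(pose proof (Hsafe xm Hxm); pose proof (Hsafe y Hy); lra)).
  apply (dist_int_ge_on_safe_interval c t0); [apply Hpos; exact Hy |].
  specialize (Hmax y Hy); lra.
Qed.

Lemma increasing_lt_last (v : nat -> nat) (a b : nat) :
  (forall i, (a <= i < b)%nat -> (v i < v (S i))%nat) ->
  forall i, (a <= i < b)%nat -> (v i < v b)%nat.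
Proof.
  induction b as [|b IH]; intros Hinc i Hi; [lia |].
  assert (Hb : (v b < v (S b))%nat) by (apply Hinc; lia).
  destruct (Nat.eq_dec i b) as [-> | Hib]; [exact Hb |].
  assert (v i < v b)%nat by (apply IH; [intros j Hj; apply Hinc |]; lia).
  lia.
Qed.

Theorem lemma8p4 (n : nat) (v : nat -> nat) (L : R) :
  (3 <= n)%nat ->
  (forall i, (1 <= i <= n - 1)%nat -> (0 < v i)%nat) ->
  (forall i, (1 <= i < n - 1)%nat -> (v i < v (S i))%nat) ->
  ML (map v (seq 1 (n - 1))) = L ->
  L > 1 / INR n ->
  forall vn : nat, (0 < vn)%nat ->
    (v (n - 1) * (2 * v (n - 1) - 1) <= vn)%nat ->
    ML (map v (seq 1 (n - 1)) ++ [vn]) >= 1 / INR n.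
Proof.
  intros Hn Hpos Hinc HML HL vn Hvn Hbig; subst L.
  set (V := v (n - 1)%nat) in *.
  assert (Hle : forall i, (1 <= i <= n - 1)%nat -> (v i <= V)%nat).
  { intros i Hi; destruct (Nat.eq_dec i (n - 1)) as [-> | Hne]; [lia |].
    apply Nat.lt_le_incl, (increasing_lt_last v 1); [exact Hinc | lia]. }
  assert (HV : (2 <= V)%nat).
  { pose proof (increasing_lt_last v 1 (n - 1) Hinc 1 ltac:(lia)).
    pose proof (Hpos 1%nat ltac:(lia)). unfold V; lia. }
  assert (Hws : forall x, In x (map v (seq 1 (n - 1))) -> (0 < x <= V)%nat).
  { intros x Hx; apply in_map_iff in Hx; destruct Hx as [i [<- Hi]]; apply in_seq in Hi.
    split; [apply Hpos | apply Hle]; lia. }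
  apply ML_app_large_speed_ge; [lia | | intros x Hx; apply Hws, Hx | exact Hvn | | | exact HL].
  - intro E; apply (in_nil (a := v 1%nat)); rewrite <- E.
    apply in_map, in_seq; lia.
  - intros x y Hx Hy Hxy; apply Hws in Hx; apply Hws in Hy.
    assert (x * y <= V * (V - 1))%nat
      by (destruct (Nat.lt_ge_cases x y); [| assert (y < x)%nat by lia]; nia).
    nia.
  - intros x Hx; apply Hws in Hx; nia.
Qed.
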